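(* Let $G$ be a countable group and $\mu$ a symmetric probability measure on $G$ (i.e. $\mu(g)=\mu(g^{-1})$ for all $g$) whose support generates $G$ as a group. Let $(X_1,X_2,\ldots)$ be a $\mu$-random walk on $G$ and, for $n\ge 1$, let $\mathcal{S}_n$ be the semigroup generated by $\{X_n,X_{n+1},\ldots\}$. Fix $n\ge 1$. If almost surely $X_i^{-1}\in\mathcal{S}_n$ for all $i\ge n$, then $\mathcal{S}_n=G$ almost surely.
   Context: A $\mu$-random walk on $G$ is defined by taking $\zeta_1,\zeta_2,\ldots$ i.i.d. with law $\mu$ and setting $X_n=\zeta_1\zeta_2\cdots\zeta_n$. *)

From HB Require Import structures.
From mathcomp Require Import all_boot all_order all_algebra monoid.
From mathcomp Require Import all_classical all_reals all_analysis.
Set Implicit Arguments. Unset Strict Implicit. Unset Printing Implicit Defensive.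
Import Order.TTheory GRing.Theory Num.Theory.
Local Open Scope classical_set_scope.
Local Open Scope ring_scope.

Section Defs.
Variable G : groupType.

Inductive sgen (A : set G) : set G :=
  | sgen_base x : A x -> sgen A x
  | sgen_mul x y : sgen A x -> sgen A y -> sgen A (monoid.mul x y).

Inductive ggen (A : set G) : set G :=
  | ggen_base x : A x -> ggen A x
  | ggen_one : ggen A monoid.one
  | ggen_inv x : ggen A x -> ggen A (monoid.inv x)
  | ggen_mul x y : ggen A x -> ggen A y -> ggen A (monoid.mul x y).

Variable R : realType.

Definition is_prob_fun (mu : G -> R) : Prop :=
  (forall g, 0 <= mu g) /\ (\esum_(g in [set: G]) (mu g)%:E = 1)%E.

Definition mu_support (mu : G -> R) : set G := [set g | mu g != 0].

Definition symmetric_fun (mu : G -> R) : Prop := forall g, mu g = mu (monoid.inv g).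

Fixpoint rwalk (T : Type) (zeta : nat -> T -> G) (n : nat) (w : T) : G :=
  match n with
  | 0 => monoid.one
  | m.+1 => monoid.mul (rwalk zeta m w) (zeta m.+1 w)
  end.

(* zeta_1, zeta_2, ... are i.i.d. with law mu (G discrete): the events
   {zeta_i = g} are measurable and, for every k and g_1..g_k,
   P(zeta_1 = g_1, ..., zeta_k = g_k) = mu(g_1) ... mu(g_k). *)
Definition iid_law d (T : measurableType d) (P : probability T R)
    (zeta : nat -> T -> G) (mu : G -> R) : Prop :=
  (forall i g, measurable [set w | zeta i w = g]) /\
  (forall (k : nat) (g : nat -> G),
     P [set w | forall i, (1 <= i <= k)%N -> zeta i w = g i]
       = (\prod_(1 <= i < k.+1) mu (g i))%:E).

Definition Sgen_tail (T : Type) (zeta : nat -> T -> G) (n : nat) (w : T) : set G :=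
  sgen [set x | exists i, (n <= i)%N /\ x = rwalk zeta i w].

End Defs.

From HB Require Import structures.
From mathcomp Require Import all_boot all_order all_algebra monoid.
From mathcomp Require Import all_classical all_reals all_analysis.
From mathcomp Require Import zify.
Import Order.TTheory GRing.Theory Num.Theory numFieldNormedType.Exports.
Local Open Scope classical_set_scope.
Local Open Scope ring_scope.
Set Implicit Arguments. Unset Strict Implicit. Unset Printing Implicit Defensive.

(* If every X_i^-1 (i >= n) lies in S_n, then S_n is closed under inverses and
   contains 1, so it contains every increment zeta_(i+1) = X_i^-1 X_(i+1) with
   i >= n.  Almost surely every g with mu g > 0 occurs among these increments,
   because the probability of avoiding g during l steps is at most
   (1 - mu g)^l.  Hence S_n contains the support of mu, and with it the group G
   that the support generates.  The probabilistic estimate is proved for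
   nat-valued sequences and transported to G along an injection G -> nat. *)

Lemma geometric_bound_le0 (R : realType) (x : \bar R) (c : R) :
  0 <= c < 1 -> (forall l, (x <= (c ^+ l)%:E)%E) -> (x <= 0)%E.
Proof.
case: x => [r| |] // /andP[c0 c1] xc; last by have := xc 0%N; rewrite expr0.
have geo : (fun l => c ^+ l) @ \oo --> 0 by apply: cvg_expr; rewrite ger0_norm.
rewrite lee_fin -(cvg_lim _ geo) //; apply: limr_ge; first exact: cvgP geo.
by apply: nearW => l; rewrite -lee_fin.
Qed.

Section nat_valued_iid.
Variables (R : realType) (d : measure_display) (T : measurableType d).
Variables (P : probability T R) (nu : nat -> R) (xi : nat -> T -> nat).
Hypothesis nu_ge0 : forall m, 0 <= nu m.
Hypothesis nu_sum1 : (\sum_(m <oo) (nu m)%:E = 1)%E.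
Hypothesis xi_measurable : forall i m, measurable [set w | xi i w = m].
Hypothesis xi_law : forall k (h : nat -> nat),
  (P [set w | forall i, (1 <= i <= k)%N -> xi i w = h i]
     <= (\prod_(1 <= i < k.+1) nu (h i))%:E)%E.

Definition mass (B : pred nat) : R := fine (\sum_(m <oo | B m) (nu m)%:E).

Lemma massE B : (mass B)%:E = (\sum_(m <oo | B m) (nu m)%:E)%E.
Proof.
have ge0 : (0 <= \sum_(m <oo | B m) (nu m)%:E)%E.
  by apply: nneseries_ge0 => m _ _; rewrite lee_fin.
have le1 : (\sum_(m <oo | B m) (nu m)%:E <= 1)%E.
  rewrite -nu_sum1 eseries_mkcond.
  by apply: lee_nneseries => [m _ _|m _]; case: ifP; rewrite lee_fin.
by rewrite /mass fineK // ge0_fin_numE // (le_lt_trans le1) ?ltry.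
Qed.

Lemma mass_ge0 B : 0 <= mass B.
Proof. by rewrite -lee_fin massE; apply: nneseries_ge0 => m _ _; rewrite lee_fin. Qed.

Lemma mass_pred1 m : mass (pred1 m) = nu m.
Proof.
apply: EFin_inj; rewrite massE (nneseriesD1 _ (n := m)) //= ?eqxx //.
  by rewrite eseries0 ?adde0 // => k _ /andP[/eqP -> /eqP].
by move=> k _; rewrite lee_fin.
Qed.

Lemma mass_predT : mass predT = 1.
Proof. by apply: EFin_inj; rewrite massE. Qed.

Lemma mass_predC1 m : mass (predC1 m) = 1 - nu m.
Proof.
apply: EFin_inj; rewrite massE EFinB -nu_sum1.
rewrite [in RHS](@nneseriesD1 _ _ m xpredT) //; last by move=> k _; rewrite lee_fin.
by rewrite [X in (X - _)%E]addeC addeK.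
Qed.

Definition cylinder (C : nat -> pred nat) k : set T :=
  [set w | forall i, (1 <= i <= k)%N -> C i (xi i w)].

Lemma cylinder_measurable C k : measurable (cylinder C k).
Proof.
have -> : cylinder C k = \bigcap_(i in [set i | (1 <= i <= k)%N])
    \bigcup_(m in [set m | C i m]) [set w | xi i w = m].
  apply/seteqP; split=> [w Cw i ik|w Cw i ik]; first by exists (xi i w) => //; exact: Cw.
  by have [m Cm ->] := Cw i ik.
by apply: bigcap_measurableType => i _; apply: bigcup_measurable => m _.
Qed.

(* Unpinning coordinate j.+1 splits the cylinder into a countable union over
   the values of that coordinate, each bounded by the induction hypothesis. *)
Lemma pinned_cylinder_le_prod k j (C : nat -> pred nat) :
  (exists h : nat -> nat, forall i, (j < i <= k)%N -> C i = pred1 (h i)) ->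
  (P (cylinder C k) <= (\prod_(1 <= i < k.+1) mass (C i))%:E)%E.
Proof.
elim: j C => [|j IH] C [h Ch].
  have -> : cylinder C k = [set w | forall i, (1 <= i <= k)%N -> xi i w = h i].
    by apply/seteqP; split=> w Cw i ik; have := Cw i ik; rewrite Ch // => /eqP.
  apply: le_trans (xi_law k h) _; rewrite lee_fin le_eqVlt; apply/orP; left.
  by apply/eqP/eq_big_nat => i ik; rewrite Ch // mass_pred1.
have [kj|jk] := leqP k j.
  by apply: IH; exists h => i /andP[? ?]; exfalso; lia.
pose upd m i : pred nat := if i == j.+1 then (pred1 m : pred nat) else C i.
have upd_points m : exists h, forall i, (j < i <= k)%N -> upd m i = pred1 (h i).
  exists (fun i => if i == j.+1 then m else h i) => i /andP[ji ik]; rewrite /upd.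
  by case: eqP => // /eqP ij; apply: Ch; rewrite ik andbT ltn_neqAle eq_sym ij.
have cover : cylinder C k `<=`
    \bigcup_m (if C j.+1 m then cylinder (upd m) k else set0).
  move=> w Cw; exists (xi j.+1 w) => //; rewrite (Cw j.+1 jk) => i ik.
  by rewrite /upd; case: eqP => [->|_]; [exact: eqxx | exact: Cw].
set W := \prod_(i <- index_iota 1 k.+1 | i != j.+1) mass (C i).
have split_prod (D : nat -> pred nat) : (forall i, i != j.+1 -> D i = C i) ->
    \prod_(1 <= i < k.+1) mass (D i) = mass (D j.+1) * W.
  move=> DC; rewrite (bigD1_seq j.+1) ?iota_uniq ?mem_index_iota //=.
  by congr (_ * _); apply: eq_bigr => i /DC ->.
have mF m : measurable (if C j.+1 m then cylinder (upd m) k else set0).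
  by case: ifP => _; [exact: cylinder_measurable | exact: measurable0].
apply: le_trans (measure_sigma_subadditive _ mF (cylinder_measurable C k) cover) _.
apply: le_trans (_ : _ <= \sum_(m <oo | C j.+1 m) (W%:E * (nu m)%:E))%E _.
  rewrite [leRHS]eseries_mkcond; apply: lee_nneseries => [m _ _|m _].
    exact: measure_ge0.
  case: ifP => _; last by rewrite measure0.
  have upd_at : upd m j.+1 = pred1 m by rewrite /upd eqxx.
  rewrite -EFinM mulrC -(mass_pred1 m) -upd_at -(split_prod (upd m)); first exact: IH.
  by move=> i /negbTE ij; rewrite /upd ij.
rewrite nneseriesZl -?massE; last by move=> m _; rewrite lee_fin.
by rewrite (split_prod C) // mulrC EFinM.
Qed.

Lemma cylinder_le_prod C k :
  (P (cylinder C k) <= (\prod_(1 <= i < k.+1) mass (C i))%:E)%E.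
Proof. by apply: (pinned_cylinder_le_prod (j := k)); exists id => i; lia. Qed.

Definition avoid n m : set T := [set w | forall i, (n < i)%N -> xi i w != m].

Lemma avoid_measurable n m : measurable (avoid n m).
Proof.
have -> : avoid n m = \bigcap_(i in [set i | (n < i)%N]) ~` [set w | xi i w = m].
  by apply/seteqP; split=> w Aw i ni; apply/eqP; exact: Aw.
by apply: bigcap_measurableType => i _; exact/measurableC/xi_measurable.
Qed.

Lemma avoid_null n m : nu m != 0 -> P (avoid n m) = 0%E.
Proof.
move=> num0; pose C i : pred nat := if (n < i)%N then predC1 m else predT.
have avoid_cylinder l : avoid n m `<=` cylinder C (n + l).
  by move=> w Aw i _; rewrite /C; case: ifP => // ni; exact: Aw.
have prodC l : \prod_(1 <= i < (n + l).+1) mass (C i) = (1 - nu m) ^+ l.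
  rewrite (@big_cat_nat _ _ _ n.+1) ?ltnS ?leq_addr //=.
  rewrite (eq_big_nat _ _ (F2 := fun=> 1)) => [|i /andP[_ ni]]; last first.
    by rewrite /C ltnNge -ltnS ni /= mass_predT.
  rewrite prodr_const_nat expr1n mul1r.
  rewrite (eq_big_nat _ _ (F2 := fun=> 1 - nu m)) => [|i /andP[ni _]]; last first.
    by rewrite /C ni mass_predC1.
  by rewrite prodr_const_nat subSS addKn.
apply/eqP; rewrite eq_le measure_ge0 andbT.
apply: (geometric_bound_le0 (c := 1 - nu m)) => [|l].
  by rewrite -mass_predC1 mass_ge0 /= mass_predC1 ltrBlDr ltrDl lt0r num0 nu_ge0.
rewrite -prodC; apply: le_trans (cylinder_le_prod C (n + l)).
apply: le_measure; rewrite ?inE; first exact: avoid_measurable.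
  exact: cylinder_measurable.
exact: avoid_cylinder.
Qed.

Lemma positive_mass_values_recur n :
  {ae P, forall w m, nu m != 0 -> exists2 i, (n < i)%N & xi i w = m}.
Proof.
pose A m := if nu m != 0 then avoid n m else set0.
apply: (@negligibleS _ _ _ P (\bigcup_m A m)).
  move=> w /= notrec; apply: contrapT => notA; apply: notrec => m num0.
  apply: contrapT => norec; apply: notA; exists m => //; rewrite /A num0.
  by move=> i ni; apply/eqP => xim; apply: norec; exists i.
apply: negligible_bigcup => m; rewrite /A; case: ifP => [num0|_].
  by exists (avoid n m); split; [exact: avoid_measurable | exact: avoid_null |].
exact: negligible_set0.
Qed.

End nat_valued_iid.

Section countable_coding.
Variables (R : realType) (G : groupType) (f : G -> nat).
Hypothesis f_inj : injective f.

Let decode := 'pinv_(fun=> monoid.one) setT f.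

Lemma decodeK : cancel f decode.
Proof. by move=> g; rewrite /decode pinvKV ?in_setT // => x y _ _ /f_inj. Qed.

Lemma encode_decode m : m \in range f -> f (decode m) = m.
Proof. exact: pinvK. Qed.

Definition code_law (mu : G -> R) (m : nat) : R :=
  if m \in range f then mu (decode m) else 0.

Lemma code_law_encode mu g : code_law mu (f g) = mu g.
Proof. by rewrite /code_law ifT ?decodeK // inE; exists g. Qed.

Lemma code_law_ge0 mu : (forall g, 0 <= mu g) -> forall m, 0 <= code_law mu m.
Proof. by move=> mu0 m; rewrite /code_law; case: ifP. Qed.

Lemma code_law_sum1 mu : is_prob_fun mu -> (\sum_(m <oo) (code_law mu m)%:E = 1)%E.
Proof.
move=> [mu0 mu1]; rewrite nneseries_esumT => [|m]; last by rewrite lee_fin code_law_ge0.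
rewrite -mu1; transitivity (\esum_(g in [set: G]) (mu (decode (f g)))%:E); last first.
  by apply: eq_esum => g _; rewrite decodeK.
rewrite -(esum_image _ _ (fun m => (mu (decode m))%:E) (in2W f_inj)).
by rewrite [RHS]esum_mkcond; apply: eq_esum => m _; rewrite /code_law; case: ifP.
Qed.

Variables (d : measure_display) (T : measurableType d) (P : probability T R).
Variables (mu : G -> R) (zeta : nat -> T -> G).

Lemma encoded_preimage i m :
  [set w | f (zeta i w) = m] =
  if m \in range f then [set w | zeta i w = decode m] else set0.
Proof.
apply/seteqP; split=> w /=; case: ifPn => [mf|nmf].
- by move=> <-; rewrite decodeK.
- by move=> fm; case/negP: nmf; rewrite -fm inE; exists (zeta i w).
- by move=> ->; rewrite encode_decode.
- by [].
Qed.

Lemma encoded_measurable :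
  (forall i g, measurable [set w | zeta i w = g]) ->
  forall i m, measurable [set w | f (zeta i w) = m].
Proof. by move=> mzeta i m; rewrite encoded_preimage; case: ifP. Qed.

Lemma encoded_law : is_prob_fun mu -> iid_law P zeta mu -> forall k h,
  (P [set w | forall i, (1 <= i <= k)%N -> f (zeta i w) = h i]
     <= (\prod_(1 <= i < k.+1) code_law mu (h i))%:E)%E.
Proof.
move=> [mu0 _] [_ law] k h.
have [hf|nhf] := pselect (forall i, (1 <= i <= k)%N -> h i \in range f).
  have -> : [set w | forall i, (1 <= i <= k)%N -> f (zeta i w) = h i] =
      [set w | forall i, (1 <= i <= k)%N -> zeta i w = decode (h i)].
    apply/seteqP; split=> w Hw i ik; first by rewrite -(Hw i ik) decodeK.
    by rewrite Hw // encode_decode // hf.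
  rewrite law lee_fin le_eqVlt; apply/orP; left; apply/eqP.
  by apply: eq_big_nat => i ik; rewrite /code_law hf.
have -> : [set w | forall i, (1 <= i <= k)%N -> f (zeta i w) = h i] = set0.
  apply/seteqP; split=> // w Hw; apply: nhf => i ik.
  by rewrite inE; exists (zeta i w); rewrite ?Hw.
by rewrite measure0 lee_fin; apply: prodr_ge0 => i _; exact: code_law_ge0.
Qed.

End countable_coding.

Lemma iid_positive_mass_values_recur (R : realType) (G : groupType)
    (d : measure_display) (T : measurableType d) (P : probability T R)
    (mu : G -> R) (zeta : nat -> T -> G) n :
  countable [set: G] -> is_prob_fun mu -> iid_law P zeta mu ->
  {ae P, forall w g, mu g != 0 -> exists2 i, (n < i)%N & zeta i w = g}.
Proof.
move=> /countable_injP [f f_inj] mu_prob law.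
have {}f_inj : injective f by move=> x y; apply: f_inj; rewrite inE.
have := positive_mass_values_recur (code_law_ge0 f mu_prob.1)
  (code_law_sum1 f_inj mu_prob) (encoded_measurable f_inj law.1)
  (encoded_law f_inj mu_prob law) n.
apply: filterS => w recur g mug.
have [|i ni /f_inj] := recur (f g); first by rewrite code_law_encode.
by exists i.
Qed.

Section semigroup_generation.
Variable G : groupType.

Lemma sgen_inv (A : set G) : (forall x, A x -> sgen A (monoid.inv x)) ->
  forall x, sgen A x -> sgen A (monoid.inv x).
Proof.
move=> Ainv x; elim=> [y /Ainv //|y z _ Hy _ Hz].
by rewrite invgM; exact: sgen_mul.
Qed.

Lemma ggen_sub_sgen (A S : set G) : A !=set0 ->
  (forall x, A x -> sgen A (monoid.inv x)) -> S `<=` sgen A -> ggen S `<=` sgen A.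
Proof.
move=> [a Aa] Ainv SA g; elim=> [x /SA //||x _ /(sgen_inv Ainv) //|x y _ Hx _ Hy].
  by rewrite -(mulgV a); apply: sgen_mul; [exact: sgen_base | exact: Ainv].
exact: sgen_mul.
Qed.

Lemma rwalk_increment (T : Type) (zeta : nat -> T -> G) i w :
  zeta i.+1 w = monoid.mul (monoid.inv (rwalk zeta i w)) (rwalk zeta i.+1 w).
Proof. by rewrite /= mulgA mulVg mul1g. Qed.

Lemma Sgen_tail_setT (T : Type) (zeta : nat -> T -> G) n w (S : set G) :
  (forall g, ggen S g) ->
  (forall i, (n <= i)%N -> Sgen_tail zeta n w (monoid.inv (rwalk zeta i w))) ->
  (forall g, S g -> exists2 i, (n < i)%N & zeta i w = g) ->
  Sgen_tail zeta n w = [set: G].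
Proof.
move=> Sgen walk_inv Srecur; apply/seteqP; split=> // g _.
apply: (ggen_sub_sgen _ _ _ (Sgen g)).
- by exists (rwalk zeta n w), n.
- by move=> _ [i [ni ->]]; exact: walk_inv.
- move=> _ /Srecur [[|i] // ni <-]; rewrite rwalk_increment.
  apply: sgen_mul; first by apply: walk_inv; rewrite -ltnS.
  by apply: sgen_base; exists i.+1; rewrite ltnW.
Qed.

End semigroup_generation.

Theorem lemma1 (R : realType) (G : groupType) (d : measure_display)
    (T : measurableType d) (P : probability T R) (mu : G -> R)
    (zeta : nat -> T -> G) (n : nat) :
  countable [set: G] ->
  is_prob_fun mu ->
  symmetric_fun mu ->
  (forall g : G, ggen (mu_support mu) g) ->
  iid_law P zeta mu ->
  (1 <= n)%N ->
  {ae P, forall w, forall i, (n <= i)%N -> Sgen_tail zeta n w (monoid.inv (rwalk zeta i w))} ->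
  {ae P, forall w, Sgen_tail zeta n w = [set: G]}.
Proof.
move=> G_countable mu_prob _ mu_gen law _ walk_inv.
apply: filterS2 walk_inv (iid_positive_mass_values_recur n G_countable mu_prob law).
by move=> w winv wrecur; exact: Sgen_tail_setT mu_gen winv wrecur.
Qed.
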